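(* For every integer $n\ge1$ and every $w>0$ with $w\ne1$, $$F_n(w)\le\frac{n}{2\sqrt{w}\,|w-1|}.$$
   Context: For $w>0$ and integer $n\ge1$ let $a_n(w)=\sum_{j=0}^n w^j$, $b_n(w)=\sum_{j=1}^n jw^j$, $c_n(w)=\sum_{j=0}^n j^2w^j$, and $$F_n(w)=\frac{1}{2\sqrt{w}}\sqrt{\frac{c_n(w)}{a_n(w)}}\sqrt{\frac{a_n(w)c_n(w)-b_n(w)^2}{w\,a_n(w)^2}}.$$ *)

From Stdlib Require Import Reals.
Open Scope R_scope.

Definition a_n (n : nat) (w : R) : R := sum_f_R0 (fun j => w ^ j) n.
(* b_n(w) = sum_{j=1}^n j w^j  (the j = 0 term vanishes) *)
Definition b_n (n : nat) (w : R) : R := sum_f_R0 (fun j => INR j * w ^ j) n.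
Definition c_n (n : nat) (w : R) : R := sum_f_R0 (fun j => (INR j)^2 * w ^ j) n.

Definition F_n (n : nat) (w : R) : R :=
  / (2 * sqrt w) * sqrt (c_n n w / a_n n w)
  * sqrt ((a_n n w * c_n n w - (b_n n w)^2) / (w * (a_n n w)^2)).

(* With weights w^j on {0,..,n}, a_n is the total mass, b_n/a_n the mean and
   c_n/a_n the second moment of j, so F_n(w) = sqrt(c/a) * sqrt(D/(w a^2))
   / (2 sqrt w) with D = a c - b^2.  Two independent estimates give the claim:
   - the second moment is at most n^2, since j <= n: sqrt(c/a) <= n;
   - the closed forms of a_n, b_n, c_n (obtained by multiplying by powers of
     1 - w) yield the identity
       D (1-w)^4 = w (a (1-w))^2 - (n+1)^2 w^(n+1) (1-w)^2,
     hence D (1-w)^2 <= w a^2, i.e. sqrt(D/(w a^2)) <= 1/|w-1|. *)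

From Stdlib Require Import Reals Lra Psatz.
Open Scope R_scope.

Lemma a_n_closed n w : a_n n w * (1 - w) = 1 - w ^ S n.
Proof.
  induction n as [|n IH]; unfold a_n in *; cbn [sum_f_R0].
  - simpl; ring.
  - rewrite Rmult_plus_distr_r, IH; simpl pow; ring.
Qed.

Lemma b_n_closed n w :
  b_n n w * (1 - w) ^ 2 = w - w ^ S n * (w + (INR n + 1) * (1 - w)).
Proof.
  induction n as [|n IH]; unfold b_n in *; cbn [sum_f_R0].
  - simpl; ring.
  - rewrite Rmult_plus_distr_r, IH, S_INR; simpl pow; ring.
Qed.

Lemma c_n_closed n w :
  c_n n w * (1 - w) ^ 3 =
  w * (1 + w) - w ^ S n * (w * (1 + w) + 2 * (INR n + 1) * w * (1 - w)
                           + (INR n + 1) ^ 2 * (1 - w) ^ 2).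
Proof.
  induction n as [|n IH]; unfold c_n in *; cbn [sum_f_R0].
  - simpl; ring.
  - rewrite Rmult_plus_distr_r, IH, S_INR; simpl pow; ring.
Qed.

Lemma variance_closed n w :
  (a_n n w * c_n n w - b_n n w ^ 2) * (1 - w) ^ 4 =
  w * (a_n n w * (1 - w)) ^ 2 - (INR n + 1) ^ 2 * w ^ S n * (1 - w) ^ 2.
Proof.
  replace ((a_n n w * c_n n w - b_n n w ^ 2) * (1 - w) ^ 4)
    with (a_n n w * (1 - w) * (c_n n w * (1 - w) ^ 3)
          - (b_n n w * (1 - w) ^ 2) ^ 2) by ring.
  rewrite a_n_closed, b_n_closed, c_n_closed; ring.
Qed.

Lemma one_minus_sq_pos w : w <> 1 -> 0 < (1 - w) ^ 2.
Proof. intros Hw1; destruct (Rdichotomy w 1 Hw1); nra. Qed.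

(* Dropping the nonnegative correction term: D (1-w)^2 <= w a^2 for w >= 0. *)
Lemma variance_le n w : 0 <= w ->
  (a_n n w * c_n n w - b_n n w ^ 2) * (1 - w) ^ 2 <= w * a_n n w ^ 2.
Proof.
  intros Hw.
  destruct (Req_dec w 1) as [->|Hw1].
  { replace (1 - 1) with 0 by ring; simpl; nra. }
  assert (Hsq : 0 < (1 - w) ^ 2) by (apply one_minus_sq_pos; exact Hw1).
  assert (Hcorr : 0 <= (INR n + 1) ^ 2 * w ^ S n * (1 - w) ^ 2).
  { pose proof (pow_le w (S n) Hw); pose proof (pow2_ge_0 (INR n + 1)).
    pose proof (pow2_ge_0 (1 - w)).
    apply Rmult_le_pos; [apply Rmult_le_pos|]; assumption. }
  apply Rmult_le_reg_r with ((1 - w) ^ 2); [exact Hsq|].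
  pose proof (variance_closed n w) as Hv.
  replace ((a_n n w * c_n n w - b_n n w ^ 2) * (1 - w) ^ 2 * (1 - w) ^ 2)
    with ((a_n n w * c_n n w - b_n n w ^ 2) * (1 - w) ^ 4) by ring.
  nra.
Qed.

(* The total mass is positive: it contains the term w^0 = 1. *)
Lemma a_n_pos n w : 0 <= w -> 0 < a_n n w.
Proof.
  intros Hw; induction n as [|n IH]; unfold a_n in *; cbn [sum_f_R0].
  - simpl; lra.
  - pose proof (pow_le w (S n) Hw); lra.
Qed.

(* Since every index satisfies j <= n, the second moment is at most n^2. *)
Lemma c_n_le n w : 0 <= w -> c_n n w <= INR n ^ 2 * a_n n w.
Proof.
  intros Hw; unfold c_n, a_n; rewrite scal_sum.
  apply sum_Rle; intros j Hj.
  pose proof (pow_le w j Hw).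
  assert (Hjn : 0 <= INR j <= INR n) by (split; [apply pos_INR | apply le_INR; lia]).
  assert (INR j ^ 2 <= INR n ^ 2) by (simpl; nra).
  rewrite (Rmult_comm (w ^ j)); apply Rmult_le_compat_r; assumption.
Qed.

Lemma sqrt_div_le p q k : 0 < q -> 0 <= k -> p <= k ^ 2 * q -> sqrt (p / q) <= k.
Proof.
  intros Hq Hk Hp.
  rewrite <- (sqrt_pow2 k Hk); apply sqrt_le_1_alt.
  apply Rmult_le_reg_r with q; [exact Hq|].
  unfold Rdiv; rewrite Rmult_assoc, Rinv_l by lra; lra.
Qed.

Lemma moment_factor_le n w : 0 <= w -> sqrt (c_n n w / a_n n w) <= INR n.
Proof.
  intros Hw; apply sqrt_div_le;
    [apply a_n_pos | apply pos_INR | apply c_n_le]; assumption.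
Qed.

Lemma variance_factor_le n w : 0 < w -> w <> 1 ->
  sqrt ((a_n n w * c_n n w - b_n n w ^ 2) / (w * a_n n w ^ 2))
  <= / Rabs (w - 1).
Proof.
  intros Hw Hw1.
  assert (Hr : 0 < Rabs (w - 1)) by (apply Rabs_pos_lt; lra).
  assert (Ha : 0 < a_n n w) by (apply a_n_pos; lra).
  apply sqrt_div_le.
  - apply Rmult_lt_0_compat; [lra | apply pow_lt; exact Ha].
  - left; apply Rinv_0_lt_compat; exact Hr.
  - pose proof (variance_le n w (Rlt_le _ _ Hw)) as Hv.
    assert (Hsq : (/ Rabs (w - 1)) ^ 2 = / (1 - w) ^ 2).
    { rewrite pow_inv, pow2_abs; f_equal; ring. }
    rewrite Hsq.
    assert (Hd : 0 < (1 - w) ^ 2) by (apply one_minus_sq_pos; exact Hw1).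
    apply Rmult_le_reg_l with ((1 - w) ^ 2); [exact Hd|].
    rewrite <- Rmult_assoc, Rinv_r, Rmult_1_l by lra; lra.
Qed.

Theorem mainTheorem11 (n : nat) (w : R) :
  (1 <= n)%nat -> 0 < w -> w <> 1 ->
  F_n n w <= INR n / (2 * sqrt w * Rabs (w - 1)).
Proof.
  intros _ Hw Hw1.
  pose proof (moment_factor_le n w (Rlt_le _ _ Hw)) as HX.
  pose proof (variance_factor_le n w Hw Hw1) as HY.
  pose proof (sqrt_lt_R0 w Hw) as Hsw.
  assert (Hs : 0 < / (2 * sqrt w)) by (apply Rinv_0_lt_compat; lra).
  assert (Hr : 0 < Rabs (w - 1)) by (apply Rabs_pos_lt; lra).
  replace (INR n / (2 * sqrt w * Rabs (w - 1)))
    with (/ (2 * sqrt w) * INR n * / Rabs (w - 1)) by (field; lra).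
  unfold F_n.
  apply Rmult_le_compat; [| apply sqrt_pos | | exact HY].
  - apply Rmult_le_pos; [lra | apply sqrt_pos].
  - apply Rmult_le_compat_l; [lra | exact HX].
Qed.
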